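(* Let $p$ be an odd prime. Let $\mathcal{L}=(L_1,\dots,L_m)$ be a square-independent system of linear forms in $d$ variables over $\mathbb{F}_p$ and let $\Gamma_2=(q_1,\dots,q_{d_2})$ be a quadratic map from $\mathbb{F}_p^n$ to $\mathbb{F}_p^{d_2}$ of rank at least $r$. Let $\phi_1,\dots,\phi_m$ be linear maps from $(\mathbb{F}_p^n)^d$ to $\mathbb{F}_p^{d_2}$ and let $b_1,\dots,b_m\in\mathbb{F}_p^{d_2}$. Let $\mathbf{x}=(x_1,\dots,x_d)$ be chosen uniformly at random from $(\mathbb{F}_p^n)^d$. Then the probability that $\Gamma_2(L_i(\mathbf{x}))=\phi_i(\mathbf{x})+b_i$ for every $i=1,\dots,m$ differs from $p^{-md_2}$ by at most $p^{-r/2}$.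
   Context: A linear form in $d$ variables is $L(x_1,\dots,x_d)=\sum_{r=1}^d\gamma_rx_r$ with $\gamma_r\in\mathbb{F}_p$; for $\mathbf{x}\in(\mathbb{F}_p^n)^d$, $L(\mathbf{x})=\sum_r\gamma_rx_r\in\mathbb{F}_p^n$. A system $(L_1,\dots,L_m)$ with $L_i=\sum_r\gamma^{(i)}_rx_r$ is square-independent if the $d\times d$ matrices $(\gamma^{(i)}_r\gamma^{(i)}_s)_{r,s}$, $i=1,\dots,m$, are linearly independent over $\mathbb{F}_p$. A quadratic form on $\mathbb{F}_p^n$ is $q(x)=x^TMx$ with $M$ a symmetric matrix over $\mathbb{F}_p$; its associated symmetric bilinear form is $\beta(x,y)=(q(x+y)-q(x)-q(y))/2$. A quadratic map $\Gamma_2:\mathbb{F}_p^n\to\mathbb{F}_p^{d_2}$ is $x\mapsto(q_1(x),\dots,q_{d_2}(x))$ with $q_j$ quadratic forms; it has rank at least $r$ if, with $\beta_j$ the bilinear form of $q_j$, the bilinear form $\sum_j\lambda_j\beta_j$ has rank at least $r$ for every $(\lambda_1,\dots,\lambda_{d_2})\in\mathbb{F}_p^{d_2}\setminus\{0\}$. *)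

From HB Require Import structures.
From mathcomp Require Import all_boot all_order all_algebra.
Set Implicit Arguments. Unset Strict Implicit. Unset Printing Implicit Defensive.
Import Order.TTheory GRing.Theory Num.Theory.
Local Open Scope ring_scope.

Section Defs.
Variable F : fieldType.

(* A linear form L = sum_r gamma_r x_r in d variables, given by its
   coefficient row vector gamma : 'rV_d.  A point x = (x_1,...,x_d) of
   (F^n)^d is a d x n matrix whose r-th row is x_r; then
   L(x) = sum_r gamma_r x_r = gamma *m x. *)
Definition lin_form_eval (d n : nat) (gamma : 'rV[F]_d) (x : 'M[F]_(d, n))
  : 'rV[F]_n := gamma *m x.

Definition sq_mx (d : nat) (gamma : 'rV[F]_d) : 'M[F]_d :=
  \matrix_(r, s) (gamma 0 r * gamma 0 s).

Definition square_independent (m d : nat) (gamma : 'I_m -> 'rV[F]_d) : Prop :=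
  forall c : 'I_m -> F,
    \sum_(i < m) c i *: sq_mx (gamma i) = 0 -> forall i, c i = 0.

Definition qform (n : nat) (M : 'M[F]_n) (x : 'rV[F]_n) : F :=
  (x *m M *m x^T) 0 0.

Definition assoc_bilin (n : nat) (q : 'rV[F]_n -> F) (x y : 'rV[F]_n) : F :=
  (q (x + y) - q x - q y) / 2%:R.

Definition bilin_rank (n : nat) (B : 'rV[F]_n -> 'rV[F]_n -> F) : nat :=
  \rank (\matrix_(a, b) B (delta_mx 0 a) (delta_mx 0 b)).

(* Quadratic map Gamma_2 = (q_1,...,q_{d2}), q_j given by symmetric M_j. *)
Definition quad_map (n d2 : nat) (M : 'I_d2 -> 'M[F]_n) (x : 'rV[F]_n)
  : 'rV[F]_d2 := \row_j qform (M j) x.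

Definition lin_comb_bilin (n d2 : nat) (M : 'I_d2 -> 'M[F]_n)
  (lambda : 'rV[F]_d2) (x y : 'rV[F]_n) : F :=
  \sum_(j < d2) lambda 0 j * assoc_bilin (qform (M j)) x y.

Definition quad_map_rank_ge (n d2 : nat) (M : 'I_d2 -> 'M[F]_n) (r : nat)
  : Prop :=
  forall lambda : 'rV[F]_d2, lambda != 0 ->
    (r <= bilin_rank (lin_comb_bilin M lambda))%N.

End Defs.

From HB Require Import structures.
From mathcomp Require Import all_boot all_order all_algebra.
From mathcomp Require Import ring lra zify.
From mathcomp Require mxabelem.
Import Order.TTheory GRing.Theory Num.Theory.
Set Implicit Arguments. Unset Strict Implicit. Unset Printing Implicit Defensive.
Local Open Scope ring_scope.

(* For x in V = (F^n)^d let D(x) be the m x d2 matrix with rows Gamma2(L_i x) - phi_i(x);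
   the probability is N_B / |V|, where N_c is the size of the fibre of D over c and B has rows
   b_i.  By Cauchy-Schwarz it suffices to bound the number of collisions D(x) = D(y), which
   are counted by summing, over all l in W = F^(m x d2), the number of pairs with
   <l, D(x) - D(y)> = 0.  For fixed l and h, y |-> <l, D(y + h) - D(y)> is affine with
   linear part 2 <l, B(y, h)>, B the polar form of Gamma2 along the L_i, so it vanishes on a
   1/q fraction of V unless h lies in the radical of (y, h) |-> <l, B(y, h)>.  For l <> 0
   this radical has size at most |V| q^-r: square-independence yields u such that some
   mu_j = sum_i l_ij L_i(u)^2 is nonzero, and testing the radical condition on y = u^T z
   maps V modulo the radical onto the row space of sum_j mu_j M_j, whose rank is at least r.
   Odd characteristic is used only through 2 <> 0. *)

Lemma card_set_sum (T : finType) (P : pred T) :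
  #|[set x | P x]| = (\sum_(x : T) P x)%N.
Proof.
by rewrite -sum1dep_card big_mkcond; apply: eq_bigr => x _; case: (P x).
Qed.

Lemma sum_eq_indicator (T : finType) (a : T) : (\sum_(x : T) (a == x))%N = 1%N.
Proof. by rewrite (bigD1 a) //= eqxx big1 // => x; rewrite eq_sym => /negbTE ->. Qed.

Section AdditiveCounting.
Variables (V V' : finZmodType) (f : V -> V').
Hypothesis f_additive : zmod_morphism f.
HB.instance Definition _ := GRing.isZmodMorphism.Build V V' f f_additive.

Lemma card_fiber_eq_ker x0 : #|[set x | f x == f x0]| = #|[set x | f x == 0]|.
Proof.
suff ->: [set x | f x == f x0] = [set y + x0 | y in [set x | f x == 0]].
  by rewrite card_imset //; exact: addIr.
apply/setP => y; rewrite inE; apply/eqP/imsetP => [fy | [x]].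
  by exists (y - x0); rewrite ?subrK // inE raddfB /= fy subrr.
by rewrite inE => /eqP fx ->; rewrite raddfD /= fx add0r.
Qed.

Lemma card_ker_mul_image :
  #|V| = (#|[set x | f x == 0%R]| * #|[set f x | x : V]|)%N.
Proof.
rewrite -[LHS]sum1_card (partition_big f (mem [set f x | x : V])) /=; last first.
  by move=> x _; apply: imset_f.
rewrite mulnC -sum_nat_const; apply: eq_bigr => _ /imsetP[x0 _ ->].
by rewrite -(card_fiber_eq_ker x0) sum1dep_card.
Qed.

End AdditiveCounting.

Section ScalarCounting.
Variables (F : finFieldType) (U : finLmodType F) (f : U -> F).
Hypothesis f_scalar : scalar f.
HB.instance Definition _ := GRing.isLinear.Build F U F *%R f f_scalar.

Lemma card_fiber_scalar v0 a :
  f v0 != 0 -> (#|F| * #|[set x | f x == a]|)%N = #|U|.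
Proof.
move=> fv0; have preim c : f ((c / f v0) *: v0) = c by rewrite linearZ /= divfK.
have onto : [set f x | x : U] = setT.
  by apply/setP => c; rewrite !inE; apply/imsetP; exists ((c / f v0) *: v0).
rewrite (card_ker_mul_image (raddfB f)) onto cardsT mulnC -(preim a).
by rewrite (card_fiber_eq_ker (raddfB f)).
Qed.

End ScalarCounting.

Section Fibers.
Variables (A B : finType) (f : A -> B).

Definition collisions : nat := \sum_(x : A) \sum_(y : A) (f x == f y).

Lemma sum_card_fiber : (\sum_(c : B) #|[set x | f x == c]|)%N = #|A|.
Proof.
under eq_bigr do rewrite card_set_sum.
rewrite exchange_big /= -sum1_card; apply: eq_bigr => x _.
exact: sum_eq_indicator.
Qed.

Lemma sum_card_fiber_sqr :
  (\sum_(c : B) #|[set x | f x == c]| * #|[set x | f x == c]|)%N = collisions.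
Proof.
under eq_bigr do rewrite card_set_sum big_distrl /=.
rewrite exchange_big /=; apply: eq_bigr => x _.
under eq_bigr do rewrite big_distrr /=.
rewrite exchange_big /=; apply: eq_bigr => y _.
have [<- | fxy] := eqVneq (f x) (f y).
  by rewrite /= -(sum_eq_indicator (f x)); apply: eq_bigr => c _; case: (f x == c).
by apply: big1 => c _; case: eqP => // <-; rewrite eq_sym (negbTE fxy).
Qed.

End Fibers.

Section MatrixPairing.
Variables (F : finFieldType) (m k : nat).
Local Notation W := 'M[F]_(m, k).

Definition mx_pairing (l w : W) : F := \sum_i \sum_j l i j * w i j.

Lemma mx_pairing_scalar_r l : scalar (mx_pairing l).
Proof.
move=> a w w'; rewrite /mx_pairing big_distrr -big_split; apply: eq_bigr => i _.
by rewrite big_distrr -big_split; apply: eq_bigr => j _; rewrite !mxE mulrDr mulrCA.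
Qed.

HB.instance Definition _ l :=
  GRing.isLinear.Build F W F *%R (mx_pairing l) (mx_pairing_scalar_r l).

Lemma mx_pairing_scalar_l w : scalar (mx_pairing ^~ w).
Proof.
move=> a l l'; rewrite /mx_pairing big_distrr -big_split; apply: eq_bigr => i _.
by rewrite big_distrr -big_split; apply: eq_bigr => j _; rewrite !mxE mulrDl -mulrA.
Qed.

Lemma mx_pairing_delta i j w : mx_pairing (delta_mx i j) w = w i j.
Proof.
rewrite /mx_pairing (bigD1 i) //= (bigD1 j) //= !mxE !eqxx mul1r.
rewrite big1 => [|j' /negbTE nj]; last by rewrite mxE nj andbF mul0r.
rewrite big1 ?addr0 // => i' /negbTE ni; apply: big1 => j' _.
by rewrite mxE ni mul0r.
Qed.

Lemma card_orthogonal w :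
  (#|F| * #|[set l | mx_pairing l w == 0%R]|
     = #|W| + (#|F| - 1) * #|W| * (w == 0%R))%N.
Proof.
have [-> | /matrix0Pn[i [j wij]]] := eqVneq w 0.
  rewrite (_ : [set l | _] = setT) ?cardsT; last first.
    apply/setP => l; rewrite !inE; apply/eqP.
    by apply: big1 => i _; apply: big1 => j _; rewrite mxE mulr0.
  by rewrite muln1 -mulSn subn1 prednK // ltnW // card_finNzRing_gt1.
rewrite muln0 addn0; apply: (card_fiber_scalar (mx_pairing_scalar_l w) (v0 := delta_mx i j)).
by rewrite /= mx_pairing_delta.
Qed.

Section PairingCollisions.
Variables (A : finType) (f : A -> W).

Definition pairing_collisions (l : W) : nat :=
  \sum_(x : A) \sum_(y : A) (mx_pairing l (f x - f y) == 0%R).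

Lemma pairing_collisions0 : pairing_collisions 0 = (#|A| * #|A|)%N.
Proof.
rewrite /pairing_collisions (eq_bigr (fun _ => #|A|)) ?sum_nat_const // => x _.
rewrite (eq_bigr (fun _ => 1%N)) ?sum_nat_const ?muln1 // => y _.
rewrite (_ : mx_pairing _ _ = 0) ?eqxx //.
by rewrite /mx_pairing; apply: big1 => i _; apply: big1 => j _; rewrite mxE mul0r.
Qed.

Lemma sum_pairing_collisions :
  (#|F| * \sum_(l : W) pairing_collisions l
     = (#|F| - 1) * #|W| * collisions f + #|W| * (#|A| * #|A|))%N.
Proof.
have sqA : (#|W| * (#|A| * #|A|) = \sum_(x : A) \sum_(y : A) #|W|)%N.
  by rewrite !sum_nat_const mulnC -mulnA.
rewrite /pairing_collisions /collisions exchange_big big_distrr /= sqA.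
rewrite big_distrr -big_split /=; apply: eq_bigr => x _.
rewrite exchange_big !big_distrr -big_split /=; apply: eq_bigr => y _.
rewrite -(card_set_sum (fun l => mx_pairing l (f x - f y) == 0)).
by rewrite card_orthogonal subr_eq0 addnC.
Qed.

End PairingCollisions.
End MatrixPairing.

Section QuadraticForms.
Variables (F : fieldType) (n : nat).
Hypothesis two_neq0 : 2%:R != 0 :> F.
Implicit Types (A : 'M[F]_n) (x y : 'rV[F]_n).

Lemma bilin_symmetric A x y : A^T = A -> y *m A *m x^T = x *m A *m y^T.
Proof.
move=> symA; rewrite [LHS]mx11_scalar -tr_scalar_mx -mx11_scalar.
by rewrite !trmx_mul symA trmxK mulmxA.
Qed.

Lemma qformD A x y : A^T = A ->
  qform A (x + y) = qform A x + qform A y + (x *m A *m y^T) 0 0 *+ 2.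
Proof.
move=> symA; rewrite /qform linearD /= !mulmxDl !mulmxDr (bilin_symmetric x y symA) !mxE.
by rewrite mulr2n; ring.
Qed.

Lemma bilin_delta A a b :
  ((delta_mx 0 a : 'rV[F]_n) *m A *m (delta_mx 0 b : 'rV[F]_n)^T) 0 0 = A a b.
Proof. by rewrite -rowE trmx_delta -colE !mxE. Qed.

Lemma assoc_bilin_qform A x y :
  A^T = A -> assoc_bilin (qform A) x y = (x *m A *m y^T) 0 0.
Proof.
move=> symA; rewrite /assoc_bilin qformD // -mulr_natr.
by rewrite (_ : _ - _ - _ = (x *m A *m y^T) 0 0 * 2%:R) ?mulfK //; ring.
Qed.

Lemma bilin_rank_lin_comb d2 (M : 'I_d2 -> 'M[F]_n) (lambda : 'rV[F]_d2) :
  (forall j, (M j)^T = M j) ->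
  bilin_rank (lin_comb_bilin M lambda) = \rank (\sum_j lambda 0 j *: M j)%R.
Proof.
move=> symM; rewrite /bilin_rank; congr (\rank _); apply/matrixP => a b.
rewrite !mxE summxE; apply: eq_bigr => j _.
by rewrite assoc_bilin_qform // bilin_delta mxE.
Qed.

Lemma sym_qform_eq0 A : A^T = A -> (forall x, qform A x = 0) -> A = 0.
Proof.
move=> symA qA0; have diag0 a : A a a = 0 by rewrite -bilin_delta -(qA0 (delta_mx 0 a)).
apply/matrixP => a b; rewrite mxE.
have := qA0 (delta_mx 0 a + delta_mx 0 b).
rewrite qformD // /qform !bilin_delta !diag0 !add0r => /eqP.
by rewrite -mulr_natr mulf_eq0 (negbTE two_neq0) orbF => /eqP.
Qed.

Lemma qform_sq_mx (g x : 'rV[F]_n) : qform (sq_mx g) x = ((g *m x^T) 0 0) ^+ 2.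
Proof.
rewrite /qform; have -> : sq_mx g = g^T *m g.
  by apply/matrixP => r s; rewrite !mxE big_ord1 !mxE.
have -> : x *m (g^T *m g) *m x^T = (x *m g^T) *m (g *m x^T) by rewrite !mulmxA.
rewrite mxE big_ord1 expr2; congr (_ * _).
by rewrite -[in RHS](trmxK g) -trmx_mul [RHS]mxE.
Qed.

End QuadraticForms.

Section SecondMoment.
Variables (R : realFieldType) (I : finType) (N : I -> R).
Local Notation w := (#|I|%:R : R).
Local Notation total := (\sum_i N i).

Lemma sqr_deviation_le c :
  (w * N c - total) ^+ 2 <= w * (w * \sum_i N i ^+ 2 - total ^+ 2).
Proof.
have -> : w * (w * \sum_i N i ^+ 2 - total ^+ 2) = \sum_i (w * N i - total) ^+ 2.
  rewrite [RHS](eq_bigr (fun i => w ^+ 2 * N i ^+ 2 - (2%:R * w * total) * N i + total ^+ 2));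
    last by move=> i _; ring.
  by rewrite big_split sumrB /= -!mulr_sumr sumr_const -[_ *+ #|_|]mulr_natr; ring.
by rewrite [leRHS](bigD1 c) //= lerDl sumr_ge0 // => i _; apply: sqr_ge0.
Qed.

Lemma deviation_le_of_moment (e : R) c :
  0 < e -> 0 < total ->
  e ^+ 2 * (w * \sum_i N i ^+ 2) + total ^+ 2
    <= e ^+ 2 * total ^+ 2 + w * total ^+ 2 ->
  `|N c / total - w^-1| <= e^-1.
Proof.
move=> e_gt0 total_gt0 moment.
have w_gt0 : 0 < w by rewrite ltr0n; apply/card_gt0P; exists c.
have variance : e ^+ 2 * (w * \sum_i N i ^+ 2 - total ^+ 2) <= w * total ^+ 2.
  by have := sqr_ge0 total; lra.
have dev : e ^+ 2 * (w * N c - total) ^+ 2 <= w * (w * total ^+ 2).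
  apply: le_trans (ler_wpM2l (sqr_ge0 e) (sqr_deviation_le c)) _.
  by rewrite mulrCA; apply: ler_wpM2l; [exact: ltW | exact: variance].
have -> : N c / total - w^-1 = (w * N c - total) / (w * total).
  by field; rewrite !lt0r_neq0.
set a := _ / _.
have wt_gt0 : 0 < w * total by rewrite mulr_gt0.
have a_sqr : a ^+ 2 <= e^-1 ^+ 2.
  rewrite -(ler_pM2r (exprn_gt0 2 e_gt0)) -[e^-1 ^+ 2 * _]exprMn mulVf ?lt0r_neq0 //.
  rewrite expr1n /a expr_div_n mulrAC ler_pdivrMr ?exprn_gt0 // mul1r mulrC.
  by apply: le_trans dev _; rewrite mulrA -expr2 exprMn.
have einv_gt0 : 0 < e^-1 by rewrite invr_gt0.
by rewrite ler_norml; apply/andP; split; nra.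
Qed.

End SecondMoment.

Section QuadraticSystem.
Variables (F : finFieldType) (m d n d2 : nat).
Variables (gamma : 'I_m -> 'rV[F]_d) (M : 'I_d2 -> 'M[F]_n).
Variable phi : 'I_m -> 'M[F]_(d, n) -> 'rV[F]_d2.
Hypothesis two_neq0 : 2%:R != 0 :> F.
Hypothesis M_sym : forall j, (M j)^T = M j.
Hypothesis phi_linear : forall i, linear (phi i).

Local Notation V := 'M[F]_(d, n).
Local Notation W := 'M[F]_(m, d2).

Definition defect (x : V) : W :=
  \matrix_(i, j) (qform (M j) (lin_form_eval (gamma i) x) - phi i x 0 j).

Definition polar (y h : V) : W :=
  \matrix_(i, j) (gamma i *m y *m M j *m (gamma i *m h)^T) 0 0.

Lemma defect_shift y h : defect (y + h) - defect y = defect h + polar y h *+ 2.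
Proof.
have phiD i : phi i (y + h) = phi i y + phi i h.
  by have := phi_linear i 1 y h; rewrite !scale1r.
apply/matrixP => i j; rewrite !mxE /lin_form_eval mulmxDr (qformD _ _ (M_sym j)) phiD.
(* Otherwise [ring] tries to read [qform (M j)] as an additive morphism. *)
rewrite !mxE; move: (qform (M j) (gamma i *m y)) (qform (M j) (gamma i *m h)) => a b.
by rewrite mulr2n; ring.
Qed.

Lemma polarP a y y' h : polar (a *: y + y') h = a *: polar y h + polar y' h.
Proof.
apply/matrixP => i j.
by rewrite [polar _ _ _ _]mxE mulmxDr -scalemxAr !mulmxDl -!scalemxAl !mxE.
Qed.

Definition radical (l : W) : {set V} :=
  [set h | [forall y, mx_pairing l (polar y h) == 0]].

Lemma card_shift_solutions l h :
  (#|F| * #|[set y | mx_pairing l (defect (y + h) - defect y) == 0%R]|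
     <= #|V| + (h \in radical l) * (#|F| - 1) * #|V|)%N.
Proof.
have [hR | ] := boolP (h \in radical l).
  rewrite mul1n -mulSn subn1 prednK ?leq_mul2l ?max_card ?orbT //.
  exact: ltnW (card_finNzRing_gt1 F).
rewrite inE mul0n addn0 => /forallPn[y0 ly0].
pose g y := mx_pairing l (polar y h *+ 2).
have g_scalar : scalar g.
  by move=> a y y'; rewrite /g polarP mulrnDl scalerMnr linearP.
have -> : [set y | mx_pairing l (defect (y + h) - defect y) == 0]
          = [set y | g y == - mx_pairing l (defect h)].
  by apply/setP => y; rewrite !inE defect_shift linearD addrC addr_eq0.
rewrite (card_fiber_scalar g_scalar (v0 := y0)) //.
by rewrite /g raddfMn -mulr_natr mulf_neq0.
Qed.

Lemma pairing_collisions_defect_le l :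
  (#|F| * pairing_collisions defect l
     <= #|V| * #|V| + #|radical l| * (#|F| - 1) * #|V|)%N.
Proof.
have -> : pairing_collisions defect l =
    (\sum_(h : V) #|[set y | mx_pairing l (defect (y + h) - defect y) == 0%R]|)%N.
  rewrite /pairing_collisions exchange_big [RHS](eq_bigr _ (fun h _ => card_set_sum _)).
  rewrite [RHS]exchange_big /=; apply: eq_bigr => y _.
  by rewrite (reindex_inj (addrI y)); apply: eq_bigr => h _; rewrite addrC.
rewrite big_distrr /=; apply: leq_trans.
  by apply: leq_sum => h _; apply: card_shift_solutions.
rewrite big_split /= sum_nat_const -!big_distrl /= leq_add2l.
suff -> : (\sum_(h : V) (h \in radical l) = #|radical l|)%N by [].
by rewrite -sum1_card [RHS]big_mkcond; apply: eq_bigr => h _; case: (h \in _).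
Qed.

Definition square_weight (l : W) (u : 'rV[F]_d) : 'rV[F]_d2 :=
  \row_j \sum_i l i j * ((gamma i *m u^T) 0 0) ^+ 2.

Section RadicalEmbedding.
Variables (l : W) (u : 'rV[F]_d).

Local Notation weighted_form := (\sum_j square_weight l u 0 j *: M j)%R.

Definition polar_row (h : V) : 'rV[F]_n :=
  \sum_i \sum_j (l i j * (gamma i *m u^T) 0 0) *: (gamma i *m h *m M j).

Lemma polar_row_additive : zmod_morphism polar_row.
Proof.
move=> h h'; rewrite /polar_row -sumrB; apply: eq_bigr => i _.
by rewrite -sumrB; apply: eq_bigr => j _; rewrite mulmxBr mulmxBl scalerBr.
Qed.

Lemma gamma_tensor i (z : 'rV[F]_n) :
  gamma i *m (u^T *m z) = (gamma i *m u^T) 0 0 *: z.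
Proof. by rewrite mulmxA -mul_scalar_mx -mx11_scalar. Qed.

Lemma pairing_polar_tensor h (z : 'rV[F]_n) :
  mx_pairing l (polar (u^T *m z) h) = (polar_row h *m z^T) 0 0.
Proof.
rewrite /mx_pairing /polar_row mulmx_suml summxE; apply: eq_bigr => i _.
rewrite mulmx_suml summxE; apply: eq_bigr => j _.
rewrite [polar _ _ _ _]mxE gamma_tensor -!scalemxAl (bilin_symmetric _ _ (M_sym j)).
by rewrite !mxE mulrA.
Qed.

Lemma polar_row_radical h : h \in radical l -> polar_row h = 0.
Proof.
rewrite inE => /forallP lh0; apply/rowP => k; rewrite mxE.
have := lh0 (u^T *m delta_mx 0 k).
by rewrite pairing_polar_tensor trmx_delta -colE !mxE => /eqP.
Qed.

Lemma polar_row_tensor (w : 'rV[F]_n) : polar_row (u^T *m w) = w *m weighted_form.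
Proof.
rewrite /polar_row mulmx_sumr exchange_big /=; apply: eq_bigr => j _.
rewrite mxE scaler_suml mulmx_sumr; apply: eq_bigr => i _.
by rewrite gamma_tensor -scalemxAl scalerA scalemxAr expr2 mulrA.
Qed.

Lemma card_radical_weighted_le :
  (#|radical l| * #|F| ^ \rank weighted_form <= #|V|)%N.
Proof.
rewrite (card_ker_mul_image polar_row_additive) leq_mul //.
  by apply: subset_leq_card; apply/subsetP => h /polar_row_radical; rewrite inE => ->.
rewrite -mxabelem.card_rowg; apply: subset_leq_card; apply/subsetP => w.
rewrite mxabelem.mem_rowg => /submxP[z ->]; apply/imsetP.
by exists (u^T *m z); rewrite ?polar_row_tensor.
Qed.

End RadicalEmbedding.

Lemma square_weight_neq0 l :
  square_independent gamma -> l != 0 -> exists u, square_weight l u != 0.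
Proof.
move=> gamma_sq /matrix0Pn[i0 [j0 l_neq0]].
pose T := (\sum_i l i j0 *: sq_mx (gamma i))%R.
have T_neq0 : T != 0.
  by apply: contra l_neq0 => /eqP T0; rewrite (gamma_sq (fun i => l i j0) T0 i0).
have T_sym : T^T = T.
  rewrite linear_sum; apply: eq_bigr => i _; rewrite linearZ /=; congr (_ *: _).
  by apply/matrixP => r s; rewrite !mxE mulrC.
have qformT u : qform T u = square_weight l u 0 j0.
  rewrite /qform mulmx_sumr mulmx_suml summxE mxE; apply: eq_bigr => i _.
  by rewrite -scalemxAr -scalemxAl mxE -qform_sq_mx.
have [u qTu | qT0] := pickP (fun u => qform T u != 0).
  by exists u; apply: contra qTu; rewrite qformT => /eqP ->; rewrite mxE.
case/eqP: T_neq0; apply: sym_qform_eq0 => // u.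
by apply/eqP; move/negbFE: (qT0 u).
Qed.

Section RankBound.
Variable r : nat.
Hypothesis gamma_sq : square_independent gamma.
Hypothesis M_rank : quad_map_rank_ge M r.

Lemma card_radical_le l : l != 0 -> (#|radical l| * #|F| ^ r <= #|V|)%N.
Proof.
move=> /(square_weight_neq0 gamma_sq)[u w_neq0].
apply: leq_trans (card_radical_weighted_le l u).
rewrite leq_mul // leq_pexp2l ?(ltnW (card_finNzRing_gt1 F)) //.
by have := M_rank w_neq0; rewrite (bilin_rank_lin_comb two_neq0 _ M_sym).
Qed.

Lemma collisions_defect_le :
  (#|F| ^ r * #|W| * collisions defect + #|V| * #|V|
     <= #|F| ^ r * (#|V| * #|V|) + #|W| * (#|V| * #|V|))%N.
Proof.
set P := (#|F| ^ r)%N; set q := #|F|; set v2 := (#|V| * #|V|)%N; set w := #|W|.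
have q_gt1 : (1 < q)%N := card_finNzRing_gt1 F.
have nonzero l : l != 0 -> (P * (q * pairing_collisions defect l) <= P * v2 + (q - 1) * v2)%N.
  move=> l_neq0; have := pairing_collisions_defect_le l; have := card_radical_le l_neq0.
  rewrite -/q -/P -/v2 => hR hZ.
  apply: leq_trans (leq_mul (leqnn P) hZ) _.
  have := leq_mul hR (leqnn ((q - 1) * #|V|)); rewrite /v2; nia.
have total : (P * (q * \sum_(l : W) pairing_collisions defect l) + (P * v2 + (q - 1) * v2)
              <= P * (q * v2) + w * (P * v2 + (q - 1) * v2))%N.
  rewrite (bigD1 0) //= pairing_collisions0 mulnDr mulnDr -/v2 -addnA leq_add2l.
  have -> : (w * (P * v2 + (q - 1) * v2) = \sum_(l : W) (P * v2 + (q - 1) * v2))%N.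
    by rewrite sum_nat_const.
  rewrite [X in (_ <= X)%N](bigD1 0) //= addnC leq_add2l !big_distrr /=.
  by apply: leq_sum => l; apply: nonzero.
rewrite sum_pairing_collisions -/q -/w [(#|_| * #|_|)%N](_ : _ = v2) // in total.
rewrite -(leq_pmul2l (_ : 0 < q - 1)%N) ?subn_gt0 //.
move: total; have -> : q = (q - 1).+1 by rewrite subn1 prednK // ltnW.
rewrite subSS subn0; nia.
Qed.

Lemma defect_event (b : 'I_m -> 'rV[F]_d2) :
  [set x : V | [forall i, quad_map M (lin_form_eval (gamma i) x) == phi i x + b i]]
    = [set x | defect x == \matrix_(i, j) b i 0 j].
Proof.
apply/setP => x; rewrite !inE; apply/forallP/eqP => [eq_x | /matrixP eq_x i].
  apply/matrixP => i j; have /eqP/rowP/(_ j) := eq_x i.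
  by rewrite !mxE => ->; rewrite addrAC subrr add0r.
apply/eqP/rowP => j; have := eq_x i j; rewrite !mxE => /eqP.
by rewrite subr_eq addrC => /eqP.
Qed.

Theorem quadratic_system_deviation (R : rcfType) (b : 'I_m -> 'rV[F]_d2) :
  `| #|[set x : V | [forall i, quad_map M (lin_form_eval (gamma i) x) == phi i x + b i]]|%:R
       / #|{: V}|%:R - (#|F|%:R : R) ^- (m * d2) |
    <= Num.sqrt (#|F|%:R : R) ^- r.
Proof.
pose N (c : W) : R := #|[set x | defect x == c]|%:R.
have sumN : \sum_c N c = #|V|%:R by rewrite -natr_sum sum_card_fiber.
have sumN2 : \sum_c N c ^+ 2 = (collisions defect)%:R.
  by rewrite -sum_card_fiber_sqr natr_sum; apply: eq_bigr => c _; rewrite natrM expr2.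
have q_gt0 : (0 : R) < #|F|%:R by rewrite ltr0n (ltnW (card_finNzRing_gt1 F)).
set e := Num.sqrt (#|F|%:R : R) ^+ r.
have e_gt0 : 0 < e by rewrite exprn_gt0 // sqrtr_gt0.
have e_sqr : e ^+ 2 = #|F|%:R ^+ r by rewrite exprAC sqr_sqrtr // ltW.
have V_gt0 : 0 < \sum_c N c by rewrite sumN ltr0n; apply/card_gt0P; exists 0.
have moment : e ^+ 2 * (#|W|%:R * \sum_c N c ^+ 2) + (\sum_c N c) ^+ 2
                <= e ^+ 2 * (\sum_c N c) ^+ 2 + #|W|%:R * (\sum_c N c) ^+ 2.
  rewrite sumN sumN2 e_sqr -!natrX -!natrM -!natrD ler_nat expnS expn1.
  by rewrite mulnA; exact: collisions_defect_le.
have cardW : (#|W|%:R : R) = #|F|%:R ^+ (m * d2) by rewrite card_mx natrX.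
have := deviation_le_of_moment (\matrix_(i, j) b i 0 j) e_gt0 V_gt0 moment.
by rewrite sumN cardW defect_event.
Qed.

End RankBound.

End QuadraticSystem.

Theorem lemma3p6 (R : rcfType) (p : nat) (Hp : prime p) (Hodd : odd p)
  (m d n d2 r : nat)
  (gamma : 'I_m -> 'rV['F_p]_d)
  (Hsq : square_independent gamma)
  (M : 'I_d2 -> 'M['F_p]_n)
  (Hsym : forall j, (M j)^T = M j)
  (Hrank : quad_map_rank_ge M r)
  (phi : 'I_m -> 'M['F_p]_(d, n) -> 'rV['F_p]_d2)
  (Hphi : forall i, linear (phi i))
  (b : 'I_m -> 'rV['F_p]_d2) :
  let prob : R :=
    (#|[set x : 'M['F_p]_(d, n) |
        [forall i : 'I_m,
           quad_map M (lin_form_eval (gamma i) x) == phi i x + b i]]|%:R)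
    / (#|{: 'M['F_p]_(d, n)}|%:R) in
  `| prob - (p%:R) ^- (m * d2) | <= (Num.sqrt (p%:R)) ^- r.
Proof.
have two_neq0 : (2%:R : 'F_p) != 0.
  rewrite -(dvdn_pcharf (pchar_Fp Hp)) dvdn_prime2 //.
  by apply: contraTneq Hodd => ->.
have := quadratic_system_deviation two_neq0 Hsym Hphi Hsq Hrank R b.
by rewrite card_Fp.
Qed.
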